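(* Let $V$ be finite and $n\ge2$. The functions $m_G$, as $G$ ranges over all multigraphs on $V$ without self-loops and with $|E(G)|\le n-1$, are linearly independent as functions on $(S^{n-1})^V$.
   Context: $S^{n-1}=\{x\in\mathbb{R}^n:\|x\|_2=1\}$. A multigraph on $V$ without self-loops is a finite multiset of pairs $\{u,w\}$ with $u\ne w\in V$. $m_G=\prod_{\{u,w\}\in E(G)}\langle d_u,d_w\rangle$ (with multiplicity), for $(d_u)_{u\in V}\in(S^{n-1})^V$. *)

From mathcomp Require Import all_boot all_order all_algebra.
From mathcomp Require Import reals.
Set Implicit Arguments. Unset Strict Implicit. Unset Printing Implicit Defensive.
Import Order.TTheory GRing.Theory Num.Theory.
Local Open Scope ring_scope.

Definition dotR {R : pzRingType} (n : nat) (x y : 'I_n -> R) : R :=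
  \sum_(i < n) x i * y i.

Definition on_sphere {R : pzRingType} (n : nat) (x : 'I_n -> R) : Prop :=
  dotR x x = 1.

(* Each unordered pair {u,w} (u <> w) is represented by its unique ordered
   representative (u,w) with enum_rank u < enum_rank w. *)
Definition multigraph (V : finType) := {ffun V * V -> nat}.

Definition loopless_multigraph (V : finType) (G : multigraph V) : Prop :=
  forall u w : V, G (u, w) != 0%N -> (enum_rank u < enum_rank w)%N.

Definition num_edges (V : finType) (G : multigraph V) : nat :=
  (\sum_(p : V * V) G p)%N.

Definition mG {R : pzRingType} (V : finType) (n : nat) (G : multigraph V)
    (d : V -> 'I_n -> R) : R :=
  \prod_(p : V * V) (dotR (d p.1) (d p.2)) ^+ (G p).

From mathcomp Require Import all_boot all_order all_algebra.
From mathcomp Require Import reals.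
From mathcomp Require Import ring.
Import Order.TTheory GRing.Theory Num.Theory.
Set Implicit Arguments. Unset Strict Implicit. Unset Printing Implicit Defensive.
Local Open Scope ring_scope.

(* Suppose sum_G c_G m_G = 0 on (S^{n-1})^V while some c_G is nonzero, and
   pick G0 with c_G0 <> 0 and the largest number of edges.  The edge copies
   ("slots") x = ((u,w),i), i < G0(u,w), of G0 are at most n-1, so each gets a
   private coordinate in 1..n-1; coordinate 0 serves the isolated vertices.
   For every sign vector tau we build unit vectors d^tau_v spread over the
   coordinates of the slots at v, the entry of slot x at its first endpoint
   carrying the sign tau(x).  Then <d_u,d_w> (u <> w) is affine in the signs
   with nonnegative coefficients, and averaging m_H(d^tau) against the
   character prod_slots tau(x) yields a "top coefficient" of H: a sum of
   nonnegative terms, indexed by the ways of assigning to each edge copy of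
   H a slot or the constant term, weighted by a parity factor.  A nonzero
   term forces every slot of G0 to be hit by a copy of the same pair in H,
   so G0 <= H and, by maximality, H = G0; the top coefficient of G0 itself
   is positive.  The averaged relation thus reads c_G0 * (positive) = 0. *)

Lemma mult_le_num_edges (V : finType) (G : multigraph V) (p : V * V) :
  (G p <= num_edges G)%N.
Proof. by rewrite /num_edges (bigD1 p) //= leq_addr. Qed.

Lemma mult_le_succ (V : finType) (m : nat) (G : multigraph V) :
  (num_edges G <= m)%N -> forall p, (G p <= m.+1)%N.
Proof. by move=> le_m p; rewrite (leq_trans (mult_le_num_edges G p)) // ltnW. Qed.

Lemma multigraph_eq_of_le (V : finType) (G H : multigraph V) :
  (forall p, G p <= H p)%N -> (num_edges H <= num_edges G)%N -> H = G.
Proof.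
move=> leGH leHG; have /geq_leqif := leqif_sum (P := xpredT) (fun p _ => leqif_eq (leGH p)).
move: leHG; rewrite /num_edges => -> /esym/forallP eqGH.
by apply/ffunP => p; have /implyP/(_ isT)/eqP := eqGH p.
Qed.

Section Copies.
Variables (V : finType) (k : nat) (G : multigraph V).
Hypothesis G_le : forall p, (G p <= k)%N.

Definition is_copy (e : (V * V) * 'I_k) : bool := (e.2 < G e.1)%N.

Lemma card_copies_at (q : V * V) :
  #|[pred e : (V * V) * 'I_k | is_copy e && (e.1 == q)]| = G q.
Proof.
have copies_at : [pred e : (V * V) * 'I_k | is_copy e && (e.1 == q)] =i
    [set (q, i) | i in [pred i : 'I_k | (i < G q)%N]].
  move=> [p i]; rewrite inE /is_copy /=; apply/idP/imsetP.
    by move=> /andP[hi /eqP eqpq]; exists i; rewrite -?eqpq.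
  by move=> [j hj [-> ->]]; rewrite eqxx andbT.
rewrite (eq_card copies_at) card_imset; last by move=> i j [].
rewrite -sum1_card (eq_bigl (fun i : 'I_k => true && (i < G q)%N)) //.
by rewrite -(big_ord_widen_cond k xpredT (fun _ => 1%N) (G_le q)) sum1_card card_ord.
Qed.

Lemma card_copies : #|is_copy| = num_edges G.
Proof.
rewrite -sum1_card (partition_big (fun e => e.1) xpredT) //=.
by apply: eq_bigr => q _; rewrite -(card_copies_at q) -sum1_card.
Qed.

End Copies.

Lemma copy_rank_lt (V : finType) (k : nat) (G : multigraph V) (e : (V * V) * 'I_k) :
  loopless_multigraph G -> is_copy G e -> (enum_rank e.1.1 < enum_rank e.1.2)%N.
Proof.
by case: e => [[u w] i] loopless /= copy; apply: loopless; rewrite -lt0n (leq_ltn_trans _ copy).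
Qed.

Lemma copy_ends_neq (V : finType) (k : nat) (G : multigraph V) (e : (V * V) * 'I_k) :
  loopless_multigraph G -> is_copy G e -> e.1.1 != e.1.2.
Proof. by move=> loopless /(copy_rank_lt loopless); apply: contraTneq => ->; rewrite ltnn. Qed.

Lemma mG_as_copies (R : comPzRingType) (V : finType) (k m : nat) (G : multigraph V)
    (d : V -> 'I_m -> R) : (forall p, G p <= k)%N ->
  mG G d = \prod_(e : (V * V) * 'I_k)
             (if is_copy G e then dotR (d e.1.1) (d e.1.2) else 1).
Proof.
move=> G_le; rewrite -(pair_big xpredT xpredT (fun p (i : 'I_k) =>
  if is_copy G (p, i) then dotR (d p.1) (d p.2) else 1)) /=.
apply: eq_bigr => p _; rewrite -big_mkcond /is_copy /=.
rewrite -(big_ord_widen k (fun _ => dotR (d p.1) (d p.2)) (G_le p)).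
by rewrite prodr_const card_ord.
Qed.

Lemma seq_argmax (T : eqType) (f : T -> nat) (P : pred T) (s : seq T) (x : T) :
  x \in s -> P x ->
  exists2 y, y \in s & P y /\ (forall z, z \in s -> P z -> (f z <= f y)%N).
Proof.
move=> x_in Px; pose attained k := has (fun z => P z && (f z == k)) s.
have attained_fx : exists k, attained k.
  by exists (f x); apply/hasP; exists x; rewrite ?Px ?eqxx.
have attained_le k : attained k -> (k <= \max_(z <- s | P z) f z)%N.
  by case/hasP=> z z_in /andP[Pz /eqP <-]; apply: leq_bigmax_seq.
case: (ex_maxnP attained_fx attained_le) => k /hasP[y y_in /andP[Py /eqP fy]] k_max.
exists y => //; split=> // z z_in Pz; rewrite fy; apply: k_max.
by apply/hasP; exists z; rewrite ?Pz ?eqxx.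
Qed.

Lemma sum_option (R : nmodType) (T : finType) (F : option T -> R) :
  \sum_(y : option T) F y = F None + \sum_(x : T) F (Some x).
Proof.
rewrite (bigD1 None) //=; congr (_ + _).
rewrite (eq_bigl (fun y => y \in [set Some x | x in T])); last first.
  by case=> [x|] /=; apply/esym/imsetP; [exists x | case].
by rewrite big_imset //= => x y _ _ [].
Qed.

(* Summing, over all tau : T -> bool, the
   character prod_(x in S) sgn(tau x) times a product of affine forms
   sum_y K e y * charZ tau y (y = None standing for the constant term)
   expands into a sum over choice functions phi : E -> option T, where only
   those hitting every x a number of times of the parity of [S x] survive. *)
Section SignAverage.
Variables (R : numDomainType) (T E : finType) (S : pred T).

Definition sgn (b : bool) : R := if b then -1 else 1.

Lemma sgn_sq (b : bool) : sgn b * sgn b = 1 :> R.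
Proof. by case: b; rewrite /sgn ?mulrNN mulr1. Qed.

Definition charZ (tau : {ffun T -> bool}) (y : option T) : R :=
  if y is Some x then sgn (tau x) else 1.

Definition hits (phi : {ffun E -> option T}) (x : T) : nat :=
  #|[pred e | phi e == Some x]|.

(* prod_x sum_(b : bool) sgn(b)^(S x + hits phi x): the result of summing
   the signs collected along phi over all tau. *)
Definition parity_weight (phi : {ffun E -> option T}) : R :=
  \prod_(x : T) ((-1) ^+ (S x + hits phi x) + 1).

Lemma prod_charZ (tau : {ffun T -> bool}) (phi : {ffun E -> option T}) :
  \prod_(e : E) charZ tau (phi e) = \prod_(x : T) sgn (tau x) ^+ hits phi x.
Proof.
have -> : \prod_(e : E) charZ tau (phi e) =
    \prod_(e : E) \prod_(x : T) (if phi e == Some x then sgn (tau x) else 1).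
  apply: eq_bigr => e _; case: (phi e) => [y|] /=; last by rewrite big1.
  rewrite (bigD1 y) //= eqxx big1 ?mulr1 // => x /negPf neq_xy.
  by rewrite (inj_eq Some_inj) eq_sym neq_xy.
by rewrite exchange_big; apply: eq_bigr => x _; rewrite -big_mkcond prodr_const.
Qed.

Lemma sum_sgn_exp (j : nat) : \sum_(b : bool) sgn b ^+ j = (-1) ^+ j + 1.
Proof. by rewrite big_bool /= expr1n. Qed.

Lemma sign_average (K : E -> option T -> R) :
  \sum_(tau : {ffun T -> bool})
     (\prod_(x in S) sgn (tau x)) * \prod_(e : E) \sum_(y : option T) K e y * charZ tau y
  = \sum_(phi : {ffun E -> option T}) (\prod_(e : E) K e (phi e)) * parity_weight phi.
Proof.
under eq_bigr => tau _ do rewrite bigA_distr_bigA mulr_sumr.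
rewrite exchange_big; apply: eq_bigr => phi _ /=.
under eq_bigr => tau _ do rewrite big_split /= mulrCA prod_charZ.
rewrite -mulr_sumr; congr (_ * _).
have merge_signs tau : (\prod_(x in S) sgn (tau x)) * \prod_(x : T) sgn (tau x) ^+ hits phi x
    = \prod_(x : T) sgn (tau x) ^+ (S x + hits phi x).
  rewrite big_mkcond -big_split; apply: eq_bigr => x _ /=.
  by rewrite exprD -[x \in S]/(S x); case: (S x).
under eq_bigr => tau _ do rewrite merge_signs.
rewrite -(bigA_distr_bigA (fun x b => sgn b ^+ (S x + hits phi x))).
by apply: eq_bigr => x _; rewrite sum_sgn_exp.
Qed.

Lemma sign_exp_add1 (j : nat) : (-1) ^+ j + 1 = (if odd j then 0 else 2%:R) :> R.
Proof. by rewrite -signr_odd; case: (odd j); rewrite ?expr1 ?expr0 ?addNr. Qed.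

Lemma parity_weight_ge0 (phi : {ffun E -> option T}) : 0 <= parity_weight phi.
Proof.
by apply: prodr_ge0 => x _; rewrite sign_exp_add1; case: odd; rewrite ?lexx ?ler0n.
Qed.

Lemma parity_weight_hits (phi : {ffun E -> option T}) (x : T) :
  parity_weight phi != 0 -> S x -> (0 < hits phi x)%N.
Proof.
move=> /prodf_neq0/(_ x isT) + Sx; rewrite sign_exp_add1 Sx.
by rewrite lt0n; apply: contraNneq => ->; rewrite eqxx.
Qed.

Lemma parity_weight_gt0 (phi : {ffun E -> option T}) :
  (forall x, hits phi x = S x) -> 0 < parity_weight phi.
Proof.
move=> exact_hits; apply: prodr_gt0 => x _.
by rewrite exact_hits sign_exp_add1 oddD addbb ltr0n.
Qed.

End SignAverage.

Arguments sgn {R}.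
Arguments charZ {R T}.
Arguments parity_weight {R T E} S phi.

(* The entry of a slot (a, b) at a vertex v is (v == a) s + (v == b); for
   distinct vertices only the product of opposite endpoints survives, and
   for s = +-1 the square counts the endpoints equal to v. *)
Lemma endpoint_product (R : comPzRingType) (V : eqType) (a b u w : V) (s : R) :
  a != b -> u != w ->
  ((u == a)%:R * s + (u == b)%:R) * ((w == a)%:R * s + (w == b)%:R)
  = (((u == a) && (w == b)) || ((u == b) && (w == a)))%:R * s.
Proof.
move=> ab uw.
have not_both (x y z : V) : x != y -> ~~ ((z == x) && (z == y)).
  by move=> xy; apply: contra xy => /andP[/eqP <- /eqP <-].
have not_both' (x y z : V) : x != y -> ~~ ((x == z) && (y == z)).
  by move=> xy; apply: contra xy => /andP[/eqP -> /eqP ->].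
move: (not_both _ _ u ab) (not_both _ _ w ab) (not_both' _ _ a uw) (not_both' _ _ b uw).
by case: (u == a); case: (u == b); case: (w == a); case: (w == b) => //= *; ring.
Qed.

Lemma endpoint_square (R : pzRingType) (V : eqType) (a b v : V) (s : R) :
  s * s = 1 -> a != b ->
  ((v == a)%:R * s + (v == b)%:R) * ((v == a)%:R * s + (v == b)%:R)
  = ((v == a) + (v == b))%N%:R.
Proof.
move=> ss1 ab; have : ~~ ((v == a) && (v == b)).
  by apply: contra ab => /andP[/eqP <- /eqP <-].
by case: (v == a); case: (v == b) => //= _; rewrite ?(mul1r, mul0r, addr0, add0r, mulr1, ss1).
Qed.

Section SpherePoints.
Variables (R : rcfType) (V : finType) (n' : nat) (G0 : multigraph V).
Hypotheses (G0_loopless : loopless_multigraph G0) (G0_edges : (num_edges G0 <= n')%N).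
Local Notation n := n'.+1.
Local Notation T := ((V * V) * 'I_n)%type.
Local Notation slot := (@is_copy V n G0).

Definition coord (x : T) : 'I_n := inord (index x (enum slot)).+1.

Lemma coord_val (x : T) : slot x -> val (coord x) = (index x (enum slot)).+1.
Proof.
move=> slot_x; rewrite /coord /= inordK // ltnS (leq_trans _ G0_edges) //.
by rewrite -(card_copies (mult_le_succ G0_edges)) cardE index_mem mem_enum.
Qed.

Lemma coord_neq0 (x : T) : slot x -> val (coord x) != 0%N.
Proof. by move=> /coord_val ->. Qed.

Lemma coord_inj : {in slot &, injective coord}.
Proof.
move=> x y slot_x slot_y /(congr1 val); rewrite !coord_val // => -[].
by move/(congr1 (nth x (enum slot))); rewrite !nth_index ?mem_enum.
Qed.

Definition degree (v : V) : nat :=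
  (\sum_(x in slot) ((v == x.1.1) + (v == x.1.2)))%N.
Definition isolated (v : V) : R := (degree v == 0%N)%:R.
Definition scale (v : V) : R := (Num.sqrt (degree v)%:R)^-1.

Definition copy_entry (tau : {ffun T -> bool}) (v : V) (x : T) : R :=
  scale v * ((v == x.1.1)%:R * sgn (tau x) + (v == x.1.2)%:R).

Definition point (tau : {ffun T -> bool}) (v : V) : 'I_n -> R := fun j =>
  \sum_(x in slot) (j == coord x)%:R * copy_entry tau v x
  + (val j == 0%N)%:R * isolated v.

Lemma point_coord tau v (x : T) : slot x -> point tau v (coord x) = copy_entry tau v x.
Proof.
move=> slot_x; rewrite /point (negPf (coord_neq0 slot_x)) mul0r addr0.
rewrite (bigD1 x) //= eqxx mul1r big1 ?addr0 // => y /andP[slot_y neq_yx].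
by rewrite eq_sym (inj_in_eq coord_inj) // (negPf neq_yx) mul0r.
Qed.

Lemma point_ord0 tau v : point tau v ord0 = isolated v.
Proof.
rewrite /point eqxx mul1r big1 ?add0r // => x slot_x.
have /negPf -> : ord0 != coord x by apply: contra (coord_neq0 slot_x) => /eqP <-.
by rewrite mul0r.
Qed.

Lemma point_other tau v (j : 'I_n) :
  j \notin ord0 |: [set coord x | x in slot] -> point tau v j = 0.
Proof.
rewrite !inE negb_or => /andP[j_neq0 /imsetP j_not_coord].
have /negPf j_val : val j != 0%N by apply: contra j_neq0 => /eqP j0; apply/eqP/val_inj.
rewrite /point j_val mul0r addr0 big1 // => x slot_x.
by case: eqP => [j_x|]; [case: j_not_coord; exists x | rewrite mul0r].
Qed.

Lemma dot_point tau u w : dotR (point tau u) (point tau w) =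
  \sum_(x in slot) copy_entry tau u x * copy_entry tau w x + isolated u * isolated w.
Proof.
rewrite /dotR (bigID (mem (ord0 |: [set coord x | x in slot]))) /=.
rewrite [X in _ + X]big1 ?addr0 => [|j /point_other ->]; last by rewrite mul0r.
rewrite big_setU1 /=; last by apply/imsetP => -[x /coord_neq0 + e]; rewrite -e.
rewrite big_imset /=; last exact: coord_inj.
rewrite addrC !point_ord0; congr (_ + _); apply: eq_bigr => x slot_x.
by rewrite !point_coord.
Qed.

Lemma scale_ge0 v : 0 <= scale v.
Proof. by rewrite /scale invr_ge0 sqrtr_ge0. Qed.

Lemma scale_gt0 v (x : T) : slot x -> (v == x.1.1) || (v == x.1.2) -> 0 < scale v.
Proof.
move=> slot_x v_end; rewrite /scale invr_gt0 sqrtr_gt0 ltr0n /degree.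
rewrite (bigD1 x) //= (leq_trans _ (leq_addr _ _)) //.
by case/orP: v_end => ->; rewrite ?addn0 // addnC.
Qed.

(* Each slot at v contributes scale(v)^2 to |d_v|^2, i.e. 1 in total. *)
Lemma point_on_sphere tau v : on_sphere (point tau v).
Proof.
rewrite /on_sphere dot_point.
under eq_bigr => x slot_x.
  rewrite /copy_entry mulrACA endpoint_square ?sgn_sq ?(copy_ends_neq G0_loopless) //.
  over.
rewrite -mulr_sumr -natr_sum -/(degree v) -expr2 /isolated.
have [->|deg_neq0] := eqVneq (degree v) 0%N; first by rewrite mulr0 add0r mulr1.
rewrite mulr0 addr0 /scale exprVn sqr_sqrtr ?ler0n // mulVf //.
by rewrite pnatr_eq0.
Qed.

(* Coefficient of sgn(tau x) in <d_u, d_w>: positive exactly when x is a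
   slot joining u and w. *)
Definition weight (u w : V) (x : T) : R := (slot x)%:R * (scale u * scale w) *
  (((u == x.1.1) && (w == x.1.2)) || ((u == x.1.2) && (w == x.1.1)))%:R.

Lemma weight_ge0 u w x : 0 <= weight u w x.
Proof. by rewrite /weight !mulr_ge0 ?ler0n ?scale_ge0. Qed.

Lemma dot_point_distinct tau u w : u != w ->
  dotR (point tau u) (point tau w) =
  isolated u * isolated w + \sum_(x : T) weight u w x * sgn (tau x).
Proof.
move=> uw; rewrite dot_point addrC big_mkcond /=; congr (_ + _).
apply: eq_bigr => x _; rewrite /weight -[x \in slot]/(slot x).
case slot_x: (slot x); last by rewrite !mul0r.
rewrite /copy_entry mulrACA endpoint_product ?(copy_ends_neq G0_loopless) //.
by rewrite mul1r mulrA.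
Qed.

(* Coefficients of the affine form contributed by an edge copy e of H (the
   factor 1 when e is not a copy). *)
Definition edge_coef (H : multigraph V) (e : T) (y : option T) : R :=
  if is_copy H e then
    (if y is Some x then weight e.1.1 e.1.2 x else isolated e.1.1 * isolated e.1.2)
  else (y == None)%:R.

Lemma edge_coef_ge0 H e y : 0 <= edge_coef H e y.
Proof.
rewrite /edge_coef; case: ifP => _; last exact: ler0n.
by case: y => [x|]; rewrite ?weight_ge0 // mulr_ge0 ?ler0n.
Qed.

Lemma mG_point_expand H tau : loopless_multigraph H -> (num_edges H <= n')%N ->
  mG H (point tau) = \prod_(e : T) \sum_(y : option T) edge_coef H e y * charZ tau y.
Proof.
move=> H_loopless H_edges; rewrite (mG_as_copies _ (mult_le_succ H_edges)).
apply: eq_bigr => e _; rewrite sum_option /edge_coef /= mulr1.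
case: ifP => [copy_e|_]; last by rewrite big1 ?addr0 // => x _; rewrite mul0r.
by rewrite dot_point_distinct ?(copy_ends_neq H_loopless).
Qed.

Definition top_coef (H : multigraph V) : R :=
  \sum_(phi : {ffun T -> option T})
    (\prod_(e : T) edge_coef H e (phi e)) * parity_weight slot phi.

Lemma sign_average_mG H : loopless_multigraph H -> (num_edges H <= n')%N ->
  \sum_(tau : {ffun T -> bool}) (\prod_(x in slot) sgn (tau x)) * mG H (point tau)
  = top_coef H.
Proof.
move=> H_loopless H_edges.
under eq_bigr => tau _ do rewrite mG_point_expand //.
exact: sign_average.
Qed.

Lemma edge_coef_some_neq0 H e x : loopless_multigraph H ->
  edge_coef H e (Some x) != 0 -> [/\ is_copy H e, slot x & e.1 = x.1].
Proof.
move=> H_loopless; rewrite /edge_coef /weight.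
case copy_e: (is_copy H e); last by rewrite eqxx.
case slot_x: (slot x); last by rewrite !mul0r eqxx.
have e_rank := copy_rank_lt H_loopless copy_e.
have x_rank := copy_rank_lt G0_loopless slot_x.
case: e x {copy_e slot_x} e_rank x_rank => [[a b] i] [[u w] j] /= ab uw.
rewrite mul1r => weight_neq0.
have : ((a == u) && (b == w)) || ((a == w) && (b == u)).
  by apply: contraNT weight_neq0 => /negPf ->; rewrite mulr0.
case/orP => /andP[/eqP au /eqP bw]; first by rewrite au bw.
by move: ab; rewrite au bw => /(ltn_trans uw); rewrite ltnn.
Qed.

(* A nonzero term of the top coefficient of H maps slots of G0 injectively
   to copies of H over the same pair, hence G0 <= H edgewise. *)
Lemma top_coef_support H (phi : {ffun T -> option T}) :
  loopless_multigraph H -> (num_edges H <= n')%N ->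
  (\prod_(e : T) edge_coef H e (phi e)) * parity_weight slot phi != 0 ->
  forall q, (G0 q <= H q)%N.
Proof.
move=> H_loopless H_edges; rewrite mulf_eq0 negb_or.
move=> /andP[/prodf_neq0 coef_neq0 weight_neq0] q.
have slot_hit (x : T) : slot x -> x.1 = q ->
    Some x \in phi @: [pred e : T | is_copy H e && (e.1 == q)].
  move=> slot_x xq; have /card_gt0P[e] := parity_weight_hits weight_neq0 slot_x.
  rewrite inE => /eqP phi_e; move: (coef_neq0 e isT); rewrite phi_e.
  case/(edge_coef_some_neq0 H_loopless) => copy_e _ ex.
  by apply/imsetP; exists e; rewrite // inE copy_e ex xq eqxx.
rewrite -(card_copies_at (mult_le_succ G0_edges) q).
rewrite -(card_copies_at (mult_le_succ H_edges) q) -(card_imset _ Some_inj).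
apply: leq_trans (leq_imset_card phi _); apply/subset_leq_card/subsetP.
by move=> _ /imsetP[x /andP[slot_x /eqP xq] ->]; apply: slot_hit.
Qed.

Lemma top_coef_eq0 H : loopless_multigraph H ->
  (num_edges H <= num_edges G0)%N -> H != G0 -> top_coef H = 0.
Proof.
move=> H_loopless H_le H_neq; have H_edges := leq_trans H_le G0_edges.
apply: big1 => phi _; apply/eqP; apply: contraR H_neq => term_neq0.
by apply/eqP/multigraph_eq_of_le => //; apply: top_coef_support term_neq0.
Qed.

(* The identity assignment (each slot serves itself) gives a positive term. *)
Lemma top_coef_gt0 : 0 < top_coef G0.
Proof.
pose phi0 : {ffun T -> option T} := [ffun e => if slot e then Some e else None].
have phi0_hits_x (e x : T) : (phi0 e == Some x) = (e == x) && slot x.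
  rewrite ffunE; have [->|ex] := eqVneq e x; first by case: (slot x); rewrite ?eqxx.
  by case: (slot e); rewrite // (inj_eq Some_inj) (negPf ex).
have hits_phi0 (x : T) : hits phi0 x = slot x.
  have [slot_x|not_slot_x] := boolP (slot x).
    by rewrite /hits /= -(card1 x); apply: eq_card => e; rewrite !inE phi0_hits_x slot_x andbT.
  by rewrite /hits /=; apply: eq_card0 => e; rewrite !inE phi0_hits_x (negPf not_slot_x) andbF.
rewrite /top_coef (bigD1 phi0) //=; apply: ltr_wpDr.
  apply: sumr_ge0 => phi _; rewrite mulr_ge0 ?parity_weight_ge0 //.
  by apply: prodr_ge0 => e _; apply: edge_coef_ge0.
rewrite mulr_gt0 ?parity_weight_gt0 // prodr_gt0 // => e _.
rewrite /edge_coef /weight ffunE; case slot_e: (slot e); last exact: ltr01.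
rewrite !eqxx /= !mulr_gt0 ?ltr0n ?slot_e //.
  by apply: (scale_gt0 slot_e); rewrite eqxx.
by apply: (scale_gt0 slot_e); rewrite eqxx orbT.
Qed.

Lemma sign_average_combination (s : seq (multigraph V)) (c : multigraph V -> R) :
  uniq s -> G0 \in s ->
  (forall H, H \in s -> loopless_multigraph H /\ (num_edges H <= n')%N) ->
  (forall H, H \in s -> c H != 0 -> (num_edges H <= num_edges G0)%N) ->
  \sum_(tau : {ffun T -> bool})
     (\prod_(x in slot) sgn (tau x)) * \sum_(H <- s) c H * mG H (point tau)
  = c G0 * top_coef G0.
Proof.
move=> s_uniq G0_in s_ok G0_max.
have per_graph H : H \in s -> \sum_(tau : {ffun T -> bool})
    (\prod_(x in slot) sgn (tau x)) * (c H * mG H (point tau)) = c H * top_coef H.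
  move=> H_in; have [H_loopless H_edges] := s_ok H H_in.
  rewrite -sign_average_mG // mulr_sumr.
  by apply: eq_bigr => tau _; rewrite mulrCA.
under eq_bigr => tau _ do rewrite mulr_sumr.
rewrite exchange_big /= big_seq (eq_bigr _ per_graph) -big_seq.
rewrite (bigD1_seq G0) //= big1_seq ?addr0 // => H /andP[H_neq H_in].
have [->|cH] := eqVneq (c H) 0; first by rewrite mul0r.
by rewrite top_coef_eq0 ?mulr0 ?G0_max //; case: (s_ok H H_in).
Qed.

End SpherePoints.

Theorem mainTheorem6 (R : realType) (V : finType) (n : nat) (hn : (2 <= n)%N)
    (s : seq (multigraph V)) (c : multigraph V -> R) :
  uniq s ->
  (forall G, G \in s -> loopless_multigraph G /\ (num_edges G <= n.-1)%N) ->
  (forall d : V -> 'I_n -> R, (forall v, on_sphere (d v)) ->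
     \sum_(G <- s) c G * mG G d = 0) ->
  forall G, G \in s -> c G = 0.
Proof.
case: n hn => [//|n'] _ /= s_uniq s_ok s_sum G G_in.
apply/eqP; apply: contraT => cG.
have [G0 G0_in [cG0 G0_max]] := @seq_argmax _ (@num_edges V) (fun H => c H != 0) s G G_in cG.
have [G0_loopless G0_edges] := s_ok G0 G0_in.
have := sign_average_combination G0_loopless G0_edges s_uniq G0_in s_ok G0_max.
rewrite big1 => [/esym/eqP|tau _]; last first.
  by rewrite s_sum ?mulr0 // => v; apply: point_on_sphere.
by rewrite mulf_eq0 (negPf cG0) gt_eqF ?top_coef_gt0.
Qed.
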